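(* Let $R$ be a ring and $n\ge 1$. Then $R$ is almost Armendariz if and only if the upper triangular matrix ring $T_n(R)$ is almost Armendariz.
   Context: All rings are associative with identity. For a ring $R$, $P(R)$ denotes the prime radical of $R$ (the intersection of all prime ideals of $R$, equivalently the set of strongly nilpotent elements of $R$). A ring $R$ is called almost Armendariz if whenever $f(x)=\sum_{i=0}^m a_ix^i$ and $g(x)=\sum_{j=0}^n b_jx^j\in R[x]$ satisfy $f(x)g(x)=0$, then $a_ib_j\in P(R)$ for all $0\le i\le m$, $0\le j\le n$. $T_n(R)$ denotes the ring of $n\times n$ upper triangular matrices over $R$. *)

From HB Require Import structures.
From mathcomp Require Import all_boot all_order all_algebra.
Set Implicit Arguments. Unset Strict Implicit. Unset Printing Implicit Defensive.
Import GRing.Theory.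
Local Open Scope ring_scope.

Definition is_ideal (R : nzRingType) (I : R -> Prop) : Prop :=
  [/\ I 0,
      (forall x y, I x -> I y -> I (x - y)),
      (forall r x, I x -> I (r * x)) &
      (forall r x, I x -> I (x * r))].

(** Prime ideal: proper ideal P such that for ideals A, B with AB ⊆ P,
    A ⊆ P or B ⊆ P.  (AB ⊆ P iff all products a*b lie in P.) *)
Definition is_prime_ideal (R : nzRingType) (P : R -> Prop) : Prop :=
  [/\ is_ideal P, ~ P 1 &
      forall A B : R -> Prop, is_ideal A -> is_ideal B ->
        (forall a b, A a -> B b -> P (a * b)) ->
        (forall a, A a -> P a) \/ (forall b, B b -> P b)].

Definition prime_radical (R : nzRingType) (x : R) : Prop :=
  forall P : R -> Prop, is_prime_ideal P -> P x.

Definition almost_armendariz (R : nzRingType) : Prop :=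
  forall f g : {poly R}, f * g = 0 ->
    forall i j : nat, (i < size f)%N -> (j < size g)%N ->
      prime_radical (f`_i * g`_j).

Definition uptri (R : nzRingType) (m : nat) : {pred 'M[R]_m.+1} :=
  fun A => [forall i : 'I_m.+1, forall j : 'I_m.+1, (j < i)%N ==> (A i j == 0)].

Lemma uptri_subring_closed (R : nzRingType) (m : nat) :
  subring_closed (@uptri R m).
Proof.
split.
- apply/forallP=> i; apply/forallP=> j; apply/implyP=> lt_ji.
  by rewrite !mxE (_ : (i == j) = false) // eq_sym; apply: ltn_eqF.
- move=> A B /forallP HA /forallP HB.
  apply/forallP=> i; apply/forallP=> j; apply/implyP=> lt_ji.
  move: (HA i) (HB i) => /forallP/(_ j)/implyP/(_ lt_ji)/eqP a0
                          /forallP/(_ j)/implyP/(_ lt_ji)/eqP b0.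
  by rewrite !mxE a0 b0 subr0.
- move=> A B /forallP HA /forallP HB.
  apply/forallP=> i; apply/forallP=> j; apply/implyP=> lt_ji.
  rewrite !mxE; apply/eqP; apply: big1 => k _.
  case: (ltnP k i) => [lt_ki | le_ik].
  + by move: (HA i) => /forallP/(_ k)/implyP/(_ lt_ki)/eqP ->; rewrite mul0r.
  + have lt_jk : (j < k)%N by apply: leq_trans lt_ji le_ik.
    by move: (HB k) => /forallP/(_ j)/implyP/(_ lt_jk)/eqP ->; rewrite mulr0.
Qed.

HB.instance Definition _ (R : nzRingType) (m : nat) :=
  GRing.isSubringClosed.Build _ (@uptri R m) (uptri_subring_closed R m).

Definition uptri_mat (R : nzRingType) (m : nat) := {A : 'M[R]_m.+1 | A \in @uptri R m}.

HB.instance Definition _ (R : nzRingType) (m : nat) := [isSub for (@sval _ _ : uptri_mat R m -> _)].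
HB.instance Definition _ (R : nzRingType) (m : nat) := [Choice of uptri_mat R m by <:].
HB.instance Definition _ (R : nzRingType) (m : nat) :=
  [SubChoice_isSubNzRing of uptri_mat R m by <:].

(** T_n(R): n x n upper triangular matrices over R, for n >= 1
    (the carrier uses size n.-1.+1, which is n when n >= 1). *)
Definition T_ (n : nat) (R : nzRingType) : nzRingType := uptri_mat R n.-1.

(* Both directions go through the ring morphisms relating R and T = T_n(R):
   the diagonal projections d_k : T -> R and the scalar embedding R -> T.
   If F G = 0 in T[x], then d_k F * d_k G = 0 in R[x], so every diagonal entry
   of F_i G_j lies in P(R); and a triangular matrix whose diagonal lies in
   P(R) lies in every prime Q of T: Q contains the nilpotent ideal of strictly
   upper triangular matrices, and for each k the set of r with r e_kk in Q is
   either R or a prime ideal of R.  Conversely, R is a retract of T, and the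
   prime radical is carried to the prime radical by surjective morphisms. *)

From HB Require Import structures.
From mathcomp Require Import all_boot all_order all_algebra.
From Stdlib Require Import Classical_Prop.
Set Implicit Arguments.
Unset Strict Implicit.
Unset Printing Implicit Defensive.
Import GRing.Theory.
Local Open Scope ring_scope.

Section Ideals.
Variable R : nzRingType.
Implicit Types (I P A : R -> Prop).

Lemma idealD I x y : is_ideal I -> I x -> I y -> I (x + y).
Proof.
case=> I0 IB _ _ Ix Iy; have := IB x (0 - y) Ix (IB _ _ I0 Iy).
by rewrite sub0r opprK.
Qed.

Lemma ideal_sum I J (s : seq J) (F : J -> R) :
  is_ideal I -> (forall j, I (F j)) -> I (\sum_(j <- s) F j).
Proof.
move=> idI IF; elim/big_ind: _ => //; first by case: idI.
by move=> x y; apply: idealD.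
Qed.

Lemma prime_ideal_sqr_sub P A : is_prime_ideal P -> is_ideal A ->
  (forall a b, A a -> A b -> P (a * b)) -> forall a, A a -> P a.
Proof. by case=> _ _ primeP idA /(primeP _ _ idA idA) []. Qed.

Lemma prime_ideal_ideal P : is_prime_ideal P -> is_ideal P.
Proof. by case. Qed.

Lemma prime_radical0 : prime_radical (0 : R).
Proof. by move=> P [[]]. Qed.

End Ideals.

Lemma almost_armendarizP (R : nzRingType) : almost_armendariz R <->
  forall f g : {poly R}, f * g = 0 -> forall i j, prime_radical (f`_i * g`_j).
Proof.
split=> [aaR f g fg i j | aaR f g fg i j _ _]; last exact: aaR.
have [lt_i_f|le_f_i] := ltnP i (size f); last first.
  by rewrite (nth_default _ le_f_i) mul0r; apply: prime_radical0.
have [lt_j_g|le_g_j] := ltnP j (size g); last first.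
  by rewrite (nth_default _ le_g_j) mulr0; apply: prime_radical0.
exact: aaR.
Qed.

Section SurjectiveMorphism.
Variables (S R : nzRingType) (f : {rmorphism S -> R}).
Hypothesis f_surj : forall r, exists x, f x = r.

Lemma ideal_preim (P : R -> Prop) : is_ideal P -> is_ideal (fun x => P (f x)).
Proof.
case=> P0 PB PL PR; split=> [|x y|r x|r x]; rewrite ?rmorph0 ?rmorphB ?rmorphM //.
- exact: PB.
- exact: PL.
- exact: PR.
Qed.

Lemma ideal_image (A : S -> Prop) :
  is_ideal A -> is_ideal (fun r => exists2 x, A x & f x = r).
Proof.
case=> A0 AB AL AR; split.
- by exists 0; rewrite ?rmorph0.
- by move=> _ _ [x Ax <-] [y Ay <-]; exists (x - y); rewrite ?rmorphB //; apply: AB.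
- move=> r _ [x Ax <-]; have [s <-] := f_surj r.
  by exists (s * x); rewrite ?rmorphM //; apply: AL.
- move=> r _ [x Ax <-]; have [s <-] := f_surj r.
  by exists (x * s); rewrite ?rmorphM //; apply: AR.
Qed.

Lemma prime_ideal_preim (P : R -> Prop) :
  is_prime_ideal P -> is_prime_ideal (fun x => P (f x)).
Proof.
case=> idP P1 primeP; split; [exact: ideal_preim | by rewrite rmorph1 |].
move=> A B idA idB AB_P.
have fAB_P a b : (exists2 x, A x & f x = a) -> (exists2 y, B y & f y = b) ->
    P (a * b).
  by move=> [x Ax <-] [y By <-]; rewrite -rmorphM; apply: AB_P.
have [fA_P|fB_P] := primeP _ _ (ideal_image idA) (ideal_image idB) fAB_P.
- by left=> x Ax; apply: fA_P; exists x.
- by right=> y By; apply: fB_P; exists y.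
Qed.

Lemma prime_radical_morph x : prime_radical x -> prime_radical (f x).
Proof. by move=> radx P /prime_ideal_preim; apply: radx. Qed.

End SurjectiveMorphism.

Lemma almost_armendariz_retract (R S : nzRingType)
    (s : {rmorphism R -> S}) (f : {rmorphism S -> R}) :
  cancel s f -> almost_armendariz S -> almost_armendariz R.
Proof.
move=> sK /almost_armendarizP aaS; apply/almost_armendarizP => p q pq i j.
have f_surj r : exists x, f x = r by exists (s r).
have spq : map_poly s p * map_poly s q = 0 by rewrite -rmorphM pq rmorph0.
have := aaS _ _ spq i j; rewrite !coef_map -rmorphM => rad_spq.
by rewrite -[p`_i * q`_j]sK; apply: prime_radical_morph rad_spq.
Qed.

Lemma almost_armendariz_detect (S R : nzRingType) (I : Type)
    (d : I -> {rmorphism S -> R}) :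
  (forall x, (forall k, prime_radical (d k x)) -> prime_radical x) ->
  almost_armendariz R -> almost_armendariz S.
Proof.
move=> detect /almost_armendarizP aaR; apply/almost_armendarizP => F G FG i j.
apply: detect => k.
have dFG : map_poly (d k) F * map_poly (d k) G = 0 by rewrite -rmorphM FG rmorph0.
by have := aaR _ _ dFG i j; rewrite !coef_map rmorphM.
Qed.

Section UpperTriangular.
Variables (R : nzRingType) (m : nat).
Local Notation T := (uptri_mat R m).
Implicit Types X Y : T.

Lemma uptri_lower0 X {i j : 'I_m.+1} : (j < i)%N -> val X i j = 0.
Proof.
case: X => A /= /forallP uA lt_ji.
by move: (uA i) => /forallP/(_ j)/implyP/(_ lt_ji)/eqP.
Qed.

Definition uptri_diag (k : 'I_m.+1) X : R := val X k k.

Lemma uptri_diagM k : {morph uptri_diag k : X Y / X * Y}.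
Proof.
move=> X Y; rewrite /uptri_diag /= mxE (bigD1 k) //= big1 ?addr0 // => l nlk.
have [lt_lk|le_kl] := ltnP l k; first by rewrite (uptri_lower0 X lt_lk) mul0r.
have lt_kl : (k < l)%N by rewrite ltn_neqAle le_kl andbT eq_sym.
by rewrite (uptri_lower0 Y lt_kl) mulr0.
Qed.

Fact uptri_diag_is_zmod_morphism k : zmod_morphism (uptri_diag k).
Proof. by move=> X Y; rewrite /uptri_diag /= !mxE. Qed.

Fact uptri_diag_is_monoid_morphism k : monoid_morphism (uptri_diag k).
Proof. by split; [rewrite /uptri_diag /= mxE eqxx | exact: uptri_diagM]. Qed.

HB.instance Definition _ k := GRing.isZmodMorphism.Build T R (uptri_diag k)
  (uptri_diag_is_zmod_morphism k).
HB.instance Definition _ k := GRing.isMonoidMorphism.Build T R (uptri_diag k)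
  (uptri_diag_is_monoid_morphism k).

Fact scalar_mx_uptri (r : R) : (r%:M : 'M[R]_m.+1) \in @uptri R m.
Proof.
apply/forallP=> i; apply/forallP=> j; apply/implyP=> lt_ji.
have [eij|nij] := eqVneq i j; first by rewrite eij ltnn in lt_ji.
by rewrite mxE (negbTE nij).
Qed.

Definition uptri_scalar (r : R) : T := Sub r%:M (scalar_mx_uptri r).

Fact uptri_scalar_is_zmod_morphism : zmod_morphism uptri_scalar.
Proof. by move=> r s; apply: val_inj; rewrite /= raddfB. Qed.

Fact uptri_scalar_is_monoid_morphism : monoid_morphism uptri_scalar.
Proof. by split=> [|r s]; apply: val_inj; rewrite //= scalar_mxM. Qed.

HB.instance Definition _ := GRing.isZmodMorphism.Build R T uptri_scalar
  uptri_scalar_is_zmod_morphism.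
HB.instance Definition _ := GRing.isMonoidMorphism.Build R T uptri_scalar
  uptri_scalar_is_monoid_morphism.

Lemma uptri_scalarK : cancel uptri_scalar (uptri_diag ord0).
Proof. by move=> r; rewrite /uptri_diag /= mxE eqxx mulr1n. Qed.

Definition band d X : Prop := forall i j : 'I_m.+1, (j < i + d)%N -> val X i j = 0.

Lemma band_ideal d : is_ideal (band d).
Proof.
split=> [i j _|X Y bX bY i j lt|Y X bX i j lt|Y X bX i j lt]; rewrite /= !mxE.
- by [].
- by rewrite bX // bY // subrr.
- rewrite big1 // => l _; have [lt_li|le_il] := ltnP l i.
    by rewrite (uptri_lower0 Y lt_li) mul0r.
  by rewrite bX ?mulr0 // (leq_trans lt) // leq_add2r.
- rewrite big1 // => l _; have [lt_jl|le_lj] := ltnP j l.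
    by rewrite (uptri_lower0 Y lt_jl) mulr0.
  by rewrite bX ?mul0r // (leq_ltn_trans le_lj lt).
Qed.

Lemma bandM a b X Y : band a X -> band b Y -> band (a + b) (X * Y).
Proof.
move=> bX bY i j lt; rewrite /= mxE big1 // => l _.
have [lt_l|le_l] := ltnP l (i + a); first by rewrite bX ?mul0r.
by rewrite bY ?mulr0 // (leq_trans lt) // addnA leq_add2r.
Qed.

Lemma band_le a b X : (a <= b)%N -> band b X -> band a X.
Proof. by move=> le_ab bX i j lt; apply: bX; rewrite (leq_trans lt) ?leq_add2l. Qed.

Lemma band_eq0 d X : (m.+1 <= d)%N -> band d X -> X = 0.
Proof.
move=> le_md bX; apply: val_inj; apply/matrixP=> i j; rewrite /= mxE bX //.
exact: leq_trans (ltn_ord j) (leq_trans le_md (leq_addl i d)).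
Qed.

Definition diag_unit_mx (k : 'I_m.+1) (r : R) : 'M[R]_m.+1 :=
  \matrix_(i, j) (if (i == k) && (j == k) then r else 0).

Fact diag_unit_uptri k r : diag_unit_mx k r \in @uptri R m.
Proof.
apply/forallP=> i; apply/forallP=> j; apply/implyP=> lt_ji; rewrite mxE.
have [eik|//] := eqVneq i k; have [ejk|//] := eqVneq j k.
by move: lt_ji; rewrite eik ejk ltnn.
Qed.

Definition diag_unit k r : T := Sub (diag_unit_mx k r) (diag_unit_uptri k r).

Lemma diag_unitB k : {morph diag_unit k : x y / x - y}.
Proof.
move=> x y; apply: val_inj; apply/matrixP=> i j; rewrite /= !mxE.
by case: ifP; rewrite ?subr0.
Qed.

Lemma diag_unitMl k r x : diag_unit k (r * x) = uptri_scalar r * diag_unit k x.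
Proof.
apply: val_inj; apply/matrixP=> i j; rewrite /= -mulmxE mul_scalar_mx !mxE.
by case: ifP; rewrite ?mulr0.
Qed.

Lemma diag_unitMr k r x : diag_unit k (x * r) = diag_unit k x * uptri_scalar r.
Proof.
apply: val_inj; apply/matrixP=> i j; rewrite /= [RHS]mxE (bigD1 j) //= big1 ?addr0.
  by rewrite !mxE eqxx mulr1n; case: ifP; rewrite ?mul0r.
by move=> l /negbTE nlj; rewrite !mxE nlj mulr0n mulr0.
Qed.

Lemma band1_diag0 X : (forall k, uptri_diag k X = 0) -> band 1 X.
Proof.
move=> X0 i j; rewrite addn1 ltnS leq_eqVlt => /orP[/eqP/ord_inj -> | lt_ji].
- exact: X0.
- exact: uptri_lower0.
Qed.

Lemma uptri_diag_unit k r l : uptri_diag l (diag_unit k r) = if l == k then r else 0.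
Proof. by rewrite /uptri_diag /= mxE andbb. Qed.

Lemma band1_sub_diag X :
  band 1 (X - \sum_(k < m.+1) diag_unit k (uptri_diag k X)).
Proof.
apply: band1_diag0 => l; rewrite rmorphB rmorph_sum /= (bigD1 l) //= big1.
  by rewrite uptri_diag_unit eqxx addr0 subrr.
by move=> k nkl; rewrite uptri_diag_unit eq_sym (negbTE nkl).
Qed.

Lemma band1_sub_diag_unit X k : (forall l, l != k -> uptri_diag l X = 0) ->
  band 1 (X - diag_unit k (uptri_diag k X)).
Proof.
move=> X0; apply: band1_diag0 => l; rewrite rmorphB /= uptri_diag_unit.
by have [->|nlk] := eqVneq l k; rewrite ?subrr // X0 // subr0.
Qed.

Definition diag_concentrated k (A : R -> Prop) X : Prop :=
  A (uptri_diag k X) /\ forall l, l != k -> uptri_diag l X = 0.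

Lemma diag_concentrated_ideal k A : is_ideal A -> is_ideal (diag_concentrated k A).
Proof.
case=> A0 AB AL AR; split.
- by split=> [|l _]; rewrite rmorph0.
- move=> X Y [AX X0] [AY Y0]; split; first by rewrite rmorphB; apply: AB.
  by move=> l nlk; rewrite rmorphB /= X0 // Y0 // subr0.
- move=> Y X [AX X0]; split; first by rewrite rmorphM; apply: AL.
  by move=> l nlk; rewrite rmorphM /= X0 // mulr0.
- move=> Y X [AX X0]; split; first by rewrite rmorphM; apply: AR.
  by move=> l nlk; rewrite rmorphM /= X0 // mul0r.
Qed.

Lemma diag_unit_concentrated k (A : R -> Prop) a :
  A a -> diag_concentrated k A (diag_unit k a).
Proof. by move=> Aa; split=> [|l /negbTE nlk]; rewrite uptri_diag_unit ?eqxx ?nlk. Qed.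

Section PrimeIdeal.
Variable Q : T -> Prop.
Hypothesis Qprime : is_prime_ideal Q.

Lemma band1_prime X : band 1 X -> Q X.
Proof.
have Qideal := prime_ideal_ideal Qprime.
suff band_sub k d : (0 < d)%N -> (m.+1 <= d + k)%N -> forall Y, band d Y -> Q Y.
  by apply: (band_sub m 1); rewrite ?add1n.
elim: k d => [|k IHk] d d_gt0 le_m_dk Y bY.
  have -> : Y = 0 by apply: band_eq0 bY; rewrite addn0 in le_m_dk.
  by case: Qideal.
apply: prime_ideal_sqr_sub Qprime (band_ideal d) _ _ bY => Y1 Y2 bY1 bY2.
apply: (IHk d.+1) => //; first by rewrite addSnnS.
by apply: band_le (bandM bY1 bY2); rewrite -addn1 leq_add2l.
Qed.

Lemma diag_unit_preim_ideal k : is_ideal (fun r => Q (diag_unit k r)).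
Proof.
have [Q0 QB QL QR] := prime_ideal_ideal Qprime; split=> [|x y|r x|r x].
- by rewrite -(subrr (0 : R)) diag_unitB subrr.
- by rewrite diag_unitB; apply: QB.
- by rewrite diag_unitMl; apply: QL.
- by rewrite diag_unitMr; apply: QR.
Qed.

(* Either Q contains the whole corner e_kk T e_kk, or its trace on the corner
   is a prime ideal of R, which then contains the prime radical. *)
Lemma prime_radical_diag_unit k r : prime_radical r -> Q (diag_unit k r).
Proof.
move=> rad_r; have [Qideal _ primeQ] := Qprime; have [_ _ QL _] := Qideal.
have [Q1|notQ1] := classic (Q (diag_unit k 1)).
  by rewrite -[r]mulr1 diag_unitMl; apply: QL.
apply: (rad_r (fun x => Q (diag_unit k x))).
split=> [|//|A B idA idB AB_Q]; first exact: diag_unit_preim_ideal.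
have concAB_Q X Y : diag_concentrated k A X -> diag_concentrated k B Y -> Q (X * Y).
  move=> [AX X0] [BY Y0].
  rewrite -(subrK (diag_unit k (uptri_diag k (X * Y))) (X * Y)).
  apply: idealD Qideal _ _; last by rewrite rmorphM; apply: AB_Q.
  by apply/band1_prime/band1_sub_diag_unit => l nlk; rewrite rmorphM /= X0 // mul0r.
have [concA_Q|concB_Q] := primeQ _ _ (diag_concentrated_ideal k idA)
  (diag_concentrated_ideal k idB) concAB_Q.
- by left=> a Aa; apply/concA_Q/diag_unit_concentrated.
- by right=> b Bb; apply/concB_Q/diag_unit_concentrated.
Qed.

Lemma prime_ideal_uptri X : (forall k, prime_radical (uptri_diag k X)) -> Q X.
Proof.
move=> radX; have Qideal := prime_ideal_ideal Qprime.
rewrite -(subrK (\sum_(k < m.+1) diag_unit k (uptri_diag k X)) X).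
apply: (idealD Qideal); first exact/band1_prime/band1_sub_diag.
by apply: ideal_sum Qideal _ => k; apply: prime_radical_diag_unit.
Qed.

End PrimeIdeal.

Lemma prime_radical_uptri X :
  (forall k, prime_radical (uptri_diag k X)) -> prime_radical X.
Proof. by move=> radX Q Qprime; apply: prime_ideal_uptri. Qed.

End UpperTriangular.

Theorem proposition2p1 (R : nzRingType) (n : nat) (hn : (1 <= n)%N) :
  almost_armendariz R <-> almost_armendariz (T_ n R).
Proof.
rewrite /T_; split.
- apply: (almost_armendariz_detect
    (d := fun k => @uptri_diag R n.-1 k : {rmorphism _ -> _})).
  exact: prime_radical_uptri.
- exact: (almost_armendariz_retract (@uptri_scalarK R n.-1)).
Qed.
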